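(* Let $A$ be a C*-algebra and $V$ an Abelian annihilator of $A$. Then (a) $\mathcal{P}_V$ is a Boolean algebra; (b) each Abelian annihilator of $A$ is modular.
   Context: For a C*-algebra $B$ and $S\subseteq B$, $\mathrm{Ann}_B(S)=\{a\in B: as+sa=0\ \forall s\in S\}$, and $\mathcal{P}_B=\{V\subseteq B: V=\mathrm{Ann}_B(\mathrm{Ann}_B(S)) \text{ for some } S\subseteq B_+\}$ (ordered by inclusion) is the set of annihilators of $B$. An annihilator $V\in\mathcal{P}_A$ is Abelian if it is a commutative C*-subalgebra of $A$. For $V\in\mathcal{P}_A$ (a C*-subalgebra), $\mathcal{P}_V$ is the set of annihilators computed inside $V$; $V$ is modular if $\mathcal{P}_V$ is a modular lattice. *)

From HB Require Import structures.
From mathcomp Require Import all_boot all_order all_algebra.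
From mathcomp Require Import complex.
From mathcomp Require Import boolp classical_sets reals.
Set Implicit Arguments. Unset Strict Implicit. Unset Printing Implicit Defensive.
Import Order.TTheory GRing.Theory Num.Theory.
Local Open Scope ring_scope.
Local Open Scope classical_set_scope.

Section CStar.
Variables (R : realType) (A : lmodType R[i]).
Variables (mul : A -> A -> A) (star : A -> A) (norm : A -> R).

Definition cstar_axioms : Prop :=
  [/\ (forall x y z, mul (x + y) z = mul x z + mul y z),
      (forall x y z, mul x (y + z) = mul x y + mul x z),
      (forall (a : R[i]) x y, mul (a *: x) y = a *: mul x y),
      (forall (a : R[i]) x y, mul x (a *: y) = a *: mul x y) &
      (forall x y z, mul x (mul y z) = mul (mul x y) z)] /\
  [/\ (forall x y, star (x + y) = star x + star y),
      (forall (a : R[i]) x, star (a *: x) = (a^*)%C *: star x),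
      (forall x, star (star x) = x) &
      (forall x y, star (mul x y) = mul (star y) (star x))] /\
  [/\ (forall x, norm x = 0 -> x = 0),
      (forall x y, norm (x + y) <= norm x + norm y),
      (forall (a : R[i]) x, norm (a *: x) = Normc.normc a * norm x),
      (forall x y, norm (mul x y) <= norm x * norm y) &
      (forall x, norm (mul (star x) x) = norm x ^+ 2)] /\
  (forall u : nat -> A,
     (forall e : R, 0 < e -> exists N, forall m n, (N <= m)%N -> (N <= n)%N ->
        norm (u m - u n) < e) ->
     exists l, forall e : R, 0 < e -> exists N, forall n, (N <= n)%N ->
        norm (u n - l) < e).

Definition cstar_subalgebra (B : set A) : Prop :=
  B 0 /\
  [/\ (forall x y, B x -> B y -> B (x + y)),
      (forall (a : R[i]) x, B x -> B (a *: x)),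
      (forall x y, B x -> B y -> B (mul x y)),
      (forall x, B x -> B (star x)) &
      (forall (u : nat -> A) l, (forall n, B (u n)) ->
         (forall e : R, 0 < e -> exists N, forall n, (N <= n)%N -> norm (u n - l) < e) ->
         B l)].

(* Positive elements of the C*-algebra B (computed inside B, via the
   unitization B~ = B + C1): b is self-adjoint and its spectrum lies in
   [0, +oo), i.e. for every complex lambda not in [0,+oo), b - lambda 1 is
   invertible in B~; its inverse necessarily has the form c - lambda^-1 1
   with c in B, which gives the two equations below. *)
Definition positive_part (B : set A) : set A :=
  [set b | B b /\ star b = b /\
     forall lambda : R[i], ~~ (0 <= lambda) ->
       exists c, B c /\
         mul b c - lambda *: c - lambda^-1 *: b = 0 /\
         mul c b - lambda *: c - lambda^-1 *: b = 0].

Definition Ann (B S : set A) : set A :=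
  [set a | B a /\ forall s, S s -> mul a s + mul s a = 0].

Definition annihilators (B : set A) : set (set A) :=
  [set V | exists S, S `<=` positive_part B /\ V = Ann B (Ann B S)].

Definition abelian (V : set A) : Prop :=
  cstar_subalgebra V /\ forall x y, V x -> V y -> mul x y = mul y x.

End CStar.

Section SetLattice.
Variable T : Type.
Implicit Types (F : set (set T)) (X Y Z : set T).

Definition is_join F X Y J : Prop :=
  F J /\ X `<=` J /\ Y `<=` J /\
  forall K, F K -> X `<=` K -> Y `<=` K -> J `<=` K.

Definition is_meet F X Y M : Prop :=
  F M /\ M `<=` X /\ M `<=` Y /\
  forall K, F K -> K `<=` X -> K `<=` Y -> K `<=` M.

Definition is_lattice F : Prop :=
  forall X Y, F X -> F Y ->
    (exists J, is_join F X Y J) /\ (exists M, is_meet F X Y M).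

(* x <= z -> x \/ (y /\ z) = (x \/ y) /\ z *)
Definition modular_lattice F : Prop :=
  is_lattice F /\
  forall X Y Z, F X -> F Y -> F Z -> X `<=` Z ->
    forall m j1 j2 m2, is_meet F Y Z m -> is_join F X m j1 ->
      is_join F X Y j2 -> is_meet F j2 Z m2 -> j1 = m2.

(* x /\ (y \/ z) = (x /\ y) \/ (x /\ z) *)
Definition distributive_lattice F : Prop :=
  is_lattice F /\
  forall X Y Z, F X -> F Y -> F Z ->
    forall j m a b d, is_join F Y Z j -> is_meet F X j m ->
      is_meet F X Y a -> is_meet F X Z b -> is_join F a b d -> m = d.

Definition boolean_algebra F : Prop :=
  distributive_lattice F /\
  exists bot top, F bot /\ F top /\
    (forall X, F X -> bot `<=` X /\ X `<=` top) /\
    (forall X, F X -> exists Y, F Y /\ is_meet F X Y bot /\ is_join F X Y top).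

End SetLattice.

From HB Require Import structures.
From mathcomp Require Import all_boot all_order all_algebra.
From mathcomp Require Import complex.
From mathcomp Require Import boolp classical_sets reals.
From mathcomp Require Import ring lra.
Set Implicit Arguments. Unset Strict Implicit. Unset Printing Implicit Defensive.
Import Order.TTheory GRing.Theory Num.Theory.
Local Open Scope ring_scope.
Local Open Scope classical_set_scope.

(* In the commutative C*-algebra [V] two elements annihilate each other iff
   their product vanishes, so [Ann S] is a star-ideal and an element of
   [Ann S] lying in [Ann (Ann S)] satisfies [a^* a = 0].  The analytic input is
   that [h^2] is positive for self-adjoint [h] in [V]: [h - mu] is invertible
   in the unitization of [V] for nonreal [mu] (Neumann series when [Im mu] is
   large, then descending towards the real axis with the resolvent bound
   [|Im mu| |(h - mu)^-1| <= 1]), and [h^2 - lambda = (h - mu) (h + mu)] with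
   [mu^2 = lambda].  Hence positive elements determine annihilators of
   star-ideals, and [P_V] consists of the double annihilators of star-closed
   subsets of [V]: meets are intersections, joins are double annihilators of
   unions, [Ann X] complements [X], and the ideal property yields the
   distributive law, which implies modularity. *)

Section LatticeOfSets.
Variable T : Type.
Implicit Types (F : set (set T)) (X Y Z : set T).

Lemma is_meet_sym F X Y M : is_meet F X Y M -> is_meet F Y X M.
Proof.
by move=> [FM [MX [MY Mmax]]]; split=> //; split=> //; split=> // K FK KY KX; apply: Mmax.
Qed.

Lemma is_meet_uniq F X Y M M' : is_meet F X Y M -> is_meet F X Y M' -> M = M'.
Proof.
move=> [FM [MX [MY Mmax]]] [FM' [MX' [MY' Mmax']]].
by rewrite eqEsubset; split; [apply: Mmax' | apply: Mmax].
Qed.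

Lemma is_join_uniq F X Y J J' : is_join F X Y J -> is_join F X Y J' -> J = J'.
Proof.
move=> [FJ [XJ [YJ Jmin]]] [FJ' [XJ' [YJ' Jmin']]].
by rewrite eqEsubset; split; [apply: Jmin | apply: Jmin'].
Qed.

Lemma is_meet_subl F X Z : F X -> X `<=` Z -> is_meet F Z X X.
Proof. by move=> FX XZ; split=> //; split=> //; split=> // K _ _. Qed.

(* Modularity is the instance [Z /\ (X \/ Y) = (Z /\ X) \/ (Z /\ Y)] of
   distributivity, where [Z /\ X = X]. *)
Lemma distributive_modular F : distributive_lattice F -> modular_lattice F.
Proof.
move=> [latF distrF]; split=> // X Y Z FX FY FZ XZ m j1 j2 m2 hm hj1 hj2 hm2.
apply/esym/(distrF Z X Y FZ FX FY j2 m2 X m j1 hj2) => //.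
- exact: is_meet_sym.
- exact: is_meet_subl.
- exact: is_meet_sym.
Qed.

End LatticeOfSets.

Section CStarAlgebra.
Variables (R : realType) (A : lmodType R[i]).
Variables (mul : A -> A -> A) (star : A -> A) (norm : A -> R).
Hypothesis hA : cstar_axioms mul star norm.

Lemma amulDl x y z : mul (x + y) z = mul x z + mul y z.
Proof. by case: hA => [[h _ _ _ _] _]; apply: h. Qed.
Lemma amulDr x y z : mul x (y + z) = mul x y + mul x z.
Proof. by case: hA => [[_ h _ _ _] _]; apply: h. Qed.
Lemma amulZl a x y : mul (a *: x) y = a *: mul x y.
Proof. by case: hA => [[_ _ h _ _] _]; apply: h. Qed.
Lemma amulZr a x y : mul x (a *: y) = a *: mul x y.
Proof. by case: hA => [[_ _ _ h _] _]; apply: h. Qed.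
Lemma amulA x y z : mul x (mul y z) = mul (mul x y) z.
Proof. by case: hA => [[_ _ _ _ h] _]; apply: h. Qed.
Lemma starD x y : star (x + y) = star x + star y.
Proof. by case: hA => [_ [[h _ _ _] _]]; apply: h. Qed.
Lemma starZ a x : star (a *: x) = (a^*)%C *: star x.
Proof. by case: hA => [_ [[_ h _ _] _]]; apply: h. Qed.
Lemma starK x : star (star x) = x.
Proof. by case: hA => [_ [[_ _ h _] _]]; apply: h. Qed.
Lemma starM x y : star (mul x y) = mul (star y) (star x).
Proof. by case: hA => [_ [[_ _ _ h] _]]; apply: h. Qed.
Lemma norm_eq0 x : norm x = 0 -> x = 0.
Proof. by case: hA => [_ [_ [[h _ _ _ _] _]]]; apply: h. Qed.
Lemma normD x y : norm (x + y) <= norm x + norm y.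
Proof. by case: hA => [_ [_ [[_ h _ _ _] _]]]; apply: h. Qed.
Lemma normZ a x : norm (a *: x) = Normc.normc a * norm x.
Proof. by case: hA => [_ [_ [[_ _ h _ _] _]]]; apply: h. Qed.
Lemma normM x y : norm (mul x y) <= norm x * norm y.
Proof. by case: hA => [_ [_ [[_ _ _ h _] _]]]; apply: h. Qed.
Lemma norm_cstar x : norm (mul (star x) x) = norm x ^+ 2.
Proof. by case: hA => [_ [_ [[_ _ _ _ h] _]]]; apply: h. Qed.

Definition cauchy (u : nat -> A) := forall e : R, 0 < e ->
  exists N, forall m n, (N <= m)%N -> (N <= n)%N -> norm (u m - u n) < e.

Definition converges (u : nat -> A) l := forall e : R, 0 < e ->
  exists N, forall n, (N <= n)%N -> norm (u n - l) < e.

Lemma cauchy_converges u : cauchy u -> exists l, converges u l.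
Proof. by case: hA => [_ [_ [_ h]]]; apply: h. Qed.

Lemma amul0l x : mul 0 x = 0.
Proof. by have := amulZl 0 0 x; rewrite !scale0r. Qed.
Lemma amul0r x : mul x 0 = 0.
Proof. by have := amulZr 0 x 0; rewrite !scale0r. Qed.
Lemma amulBr x y z : mul x (y - z) = mul x y - mul x z.
Proof. by rewrite amulDr -scaleN1r amulZr scaleN1r. Qed.

Lemma star0 : star 0 = 0.
Proof. by have := starZ 0 0; rewrite conjc0 !scale0r. Qed.
Lemma starN x : star (- x) = - star x.
Proof. by rewrite -scaleN1r starZ rmorphN rmorph1 scaleN1r. Qed.

Lemma norm0 : norm 0 = 0.
Proof. by have := normZ 0 0; rewrite scale0r Normc.normc0 mul0r. Qed.
Lemma normN x : norm (- x) = norm x.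
Proof. by rewrite -scaleN1r normZ normcN Normc.normc1 mul1r. Qed.
Lemma norm_ge0 x : 0 <= norm x.
Proof.
have := normD x (- x); rewrite subrr norm0 normN => h.
by rewrite -(pmulr_rge0 _ (ltr0Sn R 1)) mulr2n mulrDl mul1r.
Qed.
Lemma distrC x y : norm (x - y) = norm (y - x).
Proof. by rewrite -normN opprB. Qed.

Lemma norm_star x : norm (star x) = norm x.
Proof.
suff h y : norm y <= norm (star y) by apply/eqP; rewrite eq_le h -{2}(starK x) h.
have := normM (star y) y; rewrite norm_cstar expr2.
have [->|y0] := eqVneq (norm y) 0; first by rewrite norm_ge0.
by rewrite ler_pM2r // lt_def y0 norm_ge0.
Qed.

Lemma cstar_eq0 x : mul (star x) x = 0 -> x = 0.
Proof.
move=> h; apply: norm_eq0; have := norm_cstar x; rewrite h norm0 => /eqP.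
by rewrite eq_sym expf_eq0 /= => /eqP.
Qed.

Lemma converges_unique u l1 l2 : converges u l1 -> converges u l2 -> l1 = l2.
Proof.
move=> c1 c2; apply/eqP; rewrite -subr_eq0; apply/eqP/norm_eq0.
apply/eqP; rewrite eq_le norm_ge0 andbT; apply/ler_addgt0Pr => e e0.
rewrite add0r; have e2 : 0 < e / 2 by rewrite divr_gt0.
have [N1 h1] := c1 _ e2; have [N2 h2] := c2 _ e2.
have := h1 (maxn N1 N2) (leq_maxl _ _); have := h2 (maxn N1 N2) (leq_maxr _ _).
set v := u _ => h2v h1v.
have -> : l1 - l2 = (l1 - v) + (v - l2) by rewrite addrA subrK.
apply: (le_trans (normD _ _)); rewrite distrC [e]splitr; apply: ltW.
exact: ltrD.
Qed.

Lemma converges_mull y u l : converges u l -> converges (fun n => mul y (u n)) (mul y l).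
Proof.
move=> c e e0; have y1 : 0 < norm y + 1 by rewrite ltr_wpDl // norm_ge0.
have [N h] := c _ (divr_gt0 e0 y1); exists N => n Nn; rewrite -amulBr.
apply: (le_lt_trans (normM _ _)).
have := h n Nn; rewrite ltr_pdivlMr // => h2.
apply: le_lt_trans h2; rewrite mulrC ler_wpM2l ?norm_ge0 //.
by rewrite lerDl.
Qed.

Lemma converges_shift u l : converges u l -> converges (fun n => u n.+1) l.
Proof. by move=> c e e0; have [N h] := c _ e0; exists N => n Nn; apply: h; apply: leqW. Qed.

Lemma converges_subr u l c : converges u l -> converges (fun n => u n - c) (l - c).
Proof.
by move=> h e e0; have [N h2] := h _ e0; exists N => n Nn; rewrite opprB addrA subrK; apply: h2.
Qed.

Lemma half_pow_lt (e : R) : 0 < e -> exists N : nat, (2^-1) ^+ N < e.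
Proof.
move=> e0; have ei : 0 <= e^-1 by rewrite invr_ge0 ltW.
have := @archi_boundP R (e^-1) ei.
set N := Num.Def.archi_bound _ => h; exists N.
rewrite exprVn -[e]invrK ltf_pV2 ?posrE ?exprn_gt0 ?invr_gt0 //.
apply: (lt_le_trans h); rewrite -natrX ler_nat.
by elim: (N) => // n ih; rewrite expnS mul2n -addnn -addn1 leq_add // expn_gt0.
Qed.

Lemma geometric_cauchy u : (forall n, norm (u n.+1 - u n) <= (2^-1) ^+ n.+1) -> cauchy u.
Proof.
move=> du.
have tail n j : norm (u (n + j)%N - u n) <= (2^-1) ^+ n - (2^-1) ^+ (n + j).
  elim: j => [|j ih]; first by rewrite addn0 !subrr norm0.
  have -> : u (n + j.+1)%N - u n = (u (n + j).+1 - u (n + j)%N) + (u (n + j)%N - u n).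
    by rewrite addnS addrA subrK.
  apply: (le_trans (normD _ _)); have := du (n + j)%N; rewrite addnS exprS => h1.
  have -> : (2^-1 : R) ^+ n - 2^-1 * (2^-1) ^+ (n + j) =
      2^-1 * (2^-1) ^+ (n + j) + ((2^-1) ^+ n - (2^-1) ^+ (n + j)) by field.
  exact: lerD.
have half_ge0 : 0 <= (2^-1 : R) by rewrite invr_ge0 ler0n.
have half_le1 : (2^-1 : R) <= 1 by rewrite invf_le1 ?ler1n ?ltr0n.
move=> e e0; have [N hN] := half_pow_lt e0; exists N.
have key m n : (N <= n)%N -> (n <= m)%N -> norm (u m - u n) < e.
  move=> Nn nm; rewrite -(subnKC nm).
  apply: (le_lt_trans (tail _ _)); apply: le_lt_trans hN.
  rewrite lerBlDr; apply: (le_trans (ler_wiXn2l half_ge0 half_le1 Nn)).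
  by rewrite lerDl exprn_ge0.
move=> m n Nm Nn; case: (leqP n m) => [nm|mn]; first exact: key.
by rewrite distrC; apply: key => //; apply: ltnW.
Qed.

Section AbelianSubalgebra.
Variable V : set A.
Hypothesis hV : abelian mul star norm V.

Lemma V0 : V 0. Proof. by case: hV => [[h _] _]. Qed.
Lemma VD x y : V x -> V y -> V (x + y).
Proof. by case: hV => [[_ [h _ _ _ _]] _]; apply: h. Qed.
Lemma VZ a x : V x -> V (a *: x).
Proof. by case: hV => [[_ [_ h _ _ _]] _]; apply: h. Qed.
Lemma VM x y : V x -> V y -> V (mul x y).
Proof. by case: hV => [[_ [_ _ h _ _]] _]; apply: h. Qed.
Lemma Vstar x : V x -> V (star x).
Proof. by case: hV => [[_ [_ _ _ h _]] _]; apply: h. Qed.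
Lemma Vlim u l : (forall n, V (u n)) -> converges u l -> V l.
Proof. by case: hV => [[_ [_ _ _ _ h]] _]; apply: h. Qed.
Lemma VN x : V x -> V (- x).
Proof. by move=> h; rewrite -scaleN1r; apply: VZ. Qed.
Lemma amulC x y : V x -> V y -> mul x y = mul y x.
Proof. by case: hV => [_ h]; apply: h. Qed.

(* [q] is the quasi-inverse [y + y^2 + y^3 + ...], i.e. [1 + q = (1 - y)^-1]. *)
Lemma quasi_inverse_small y : V y -> norm y <= 2^-1 -> exists2 q, V q & mul y q = q - y.
Proof.
move=> Vy ny.
pose fix s n := if n is n.+1 then y + mul y (s n) else 0.
have Vs n : V (s n) by elim: n => [|n ih] /=; [exact: V0 | apply: VD => //; apply: VM].
have ds n : norm (s n.+1 - s n) <= (2^-1) ^+ n.+1.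
  elim: n => [|n ih]; first by rewrite /= amul0r addr0 subr0 expr1.
  have -> : s n.+2 - s n.+1 = mul y (s n.+1 - s n).
    by rewrite amulBr /= opprD addrACA subrr add0r.
  apply: (le_trans (normM _ _)); rewrite exprS.
  by apply: ler_pM => //; apply: norm_ge0.
have [l hl] := cauchy_converges (geometric_cauchy ds).
exists l; first exact: Vlim Vs hl.
apply: (converges_unique (converges_mull y hl)).
have -> : (fun n => mul y (s n)) = (fun n => s n.+1 - y).
  by apply: funext => n /=; rewrite addrC addKr.
exact: converges_subr (converges_shift hl).
Qed.

(** * Unitization *)

(* [Unitization x _ c] stands for [x + c 1] in the unitization of [V]. *)
Record unitization := Unitization { uvec : A; uvecP : V uvec; uscal : R[i] }.
HB.instance Definition _ := gen_eqMixin unitization.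
HB.instance Definition _ := gen_choiceMixin unitization.

Lemma unitization_eq (p q : unitization) : uvec p = uvec q -> uscal p = uscal q -> p = q.
Proof.
case: p => x hx a; case: q => y hy b /= exy eab; subst.
by rewrite (Prop_irrelevance hx hy).
Qed.

Definition uzero := Unitization V0 0.
Definition uadd (p q : unitization) := Unitization (VD (uvecP p) (uvecP q)) (uscal p + uscal q).
Definition uopp (p : unitization) := Unitization (VN (uvecP p)) (- uscal p).

Lemma uaddA : associative uadd.
Proof. by move=> p q r; apply: unitization_eq => /=; rewrite addrA. Qed.
Lemma uaddC : commutative uadd.
Proof. by move=> p q; apply: unitization_eq => /=; rewrite addrC. Qed.
Lemma uadd0 : left_id uzero uadd.
Proof. by move=> p; apply: unitization_eq => /=; rewrite add0r. Qed.
Lemma uaddN : left_inverse uzero uopp uadd.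
Proof. by move=> p; apply: unitization_eq => /=; rewrite addNr. Qed.
HB.instance Definition _ := GRing.isZmodule.Build unitization uaddA uaddC uadd0 uaddN.

Lemma uvec_mulP (p q : unitization) :
  V (mul (uvec p) (uvec q) + uscal p *: uvec q + uscal q *: uvec p).
Proof.
case: p q => [x Vx a] [y Vy b] /=.
by apply: VD; [apply: VD; [apply: VM | apply: VZ] | apply: VZ].
Qed.
Definition umul (p q : unitization) := Unitization (uvec_mulP p q) (uscal p * uscal q).
Definition uone := Unitization V0 1.

Lemma umulA : associative umul.
Proof.
move=> [x hx a] [y hy b] [z hz c]; apply: unitization_eq => /=; last by rewrite mulrA.
rewrite !amulDl !amulDr !amulZl !amulZr !scalerDr !scalerA amulA.
by rewrite !addrA [c * a]mulrC [c * b]mulrC (ACl (1*4*2*5*3*6*7)).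
Qed.
Lemma umulC : commutative umul.
Proof.
move=> [x hx a] [y hy b]; apply: unitization_eq => /=; last by rewrite mulrC.
by rewrite (amulC hx hy) -!addrA [_ + b *: x]addrC.
Qed.
Lemma umul1 : left_id uone umul.
Proof.
move=> [x hx a]; apply: unitization_eq => /=; last by rewrite mul1r.
by rewrite amul0l scale1r scaler0 add0r addr0.
Qed.
Lemma umulDl : left_distributive umul uadd.
Proof.
move=> [x hx a] [y hy b] [z hz c]; apply: unitization_eq => /=; last by rewrite mulrDl.
by rewrite amulDl scalerDl scalerDr !addrA (ACl (1*3*5*2*4*6)).
Qed.
Lemma uone_neq0 : uone != uzero.
Proof. by apply/eqP => /(congr1 uscal) /= /eqP; rewrite oner_eq0. Qed.
HB.instance Definition _ :=
  GRing.Zmodule_isComNzRing.Build unitization umulA umulC umul1 umulDl uone_neq0.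

Definition ucst (c : R[i]) : unitization := Unitization V0 c.
Definition uin x (Vx : V x) : unitization := Unitization Vx 0.

Lemma uvecD p q : uvec (p + q) = uvec p + uvec q. Proof. by []. Qed.
Lemma uvecN p : uvec (- p) = - uvec p. Proof. by []. Qed.
Lemma uvecM p q : uvec (p * q) = mul (uvec p) (uvec q) + uscal p *: uvec q + uscal q *: uvec p.
Proof. by []. Qed.
Lemma uvec1 : uvec 1 = 0. Proof. by []. Qed.
Lemma uvec_ucst c : uvec (ucst c) = 0. Proof. by []. Qed.
Lemma uscalD p q : uscal (p + q) = uscal p + uscal q. Proof. by []. Qed.
Lemma uscalN p : uscal (- p) = - uscal p. Proof. by []. Qed.
Lemma uscalM p q : uscal (p * q) = uscal p * uscal q. Proof. by []. Qed.
Lemma uscal1 : uscal 1 = 1. Proof. by []. Qed.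
Lemma uscal_ucst c : uscal (ucst c) = c. Proof. by []. Qed.
Lemma uscal_uin x (Vx : V x) : uscal (uin Vx) = 0. Proof. by []. Qed.

Lemma ucst1 : ucst 1 = 1. Proof. exact: unitization_eq. Qed.
Lemma ucstD a b : ucst (a + b) = ucst a + ucst b.
Proof. by apply: unitization_eq => //=; rewrite addr0. Qed.
Lemma ucstN a : ucst (- a) = - ucst a.
Proof. by apply: unitization_eq => //=; rewrite oppr0. Qed.
Lemma ucstB a b : ucst (a - b) = ucst a - ucst b.
Proof. by rewrite ucstD ucstN. Qed.
Lemma ucstM a b : ucst (a * b) = ucst a * ucst b.
Proof. by apply: unitization_eq => /=; rewrite ?amul0l ?scaler0 ?scale0r ?add0r ?addr0 ?mulr0 ?mul0r. Qed.
Lemma ucst_mul_uin c x (Vx : V x) : ucst c * uin Vx = uin (VZ c Vx).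
Proof. by apply: unitization_eq => /=; rewrite ?amul0l ?scaler0 ?scale0r ?add0r ?addr0 ?mulr0 ?mul0r. Qed.
Lemma uinM x y (Vx : V x) (Vy : V y) : uin Vx * uin Vy = uin (VM Vx Vy).
Proof. by apply: unitization_eq => /=; rewrite ?amul0l ?scaler0 ?scale0r ?add0r ?addr0 ?mulr0 ?mul0r. Qed.
Lemma uinD x y (Vx : V x) (Vy : V y) : uin Vx + uin Vy = uin (VD Vx Vy).
Proof. by apply: unitization_eq => //=; rewrite addr0. Qed.
Lemma uinN x (Vx : V x) : - uin Vx = uin (VN Vx).
Proof. by apply: unitization_eq => //=; rewrite oppr0. Qed.
Lemma uin_eq x y (Vx : V x) (Vy : V y) : x = y -> uin Vx = uin Vy.
Proof. by move=> e; apply: unitization_eq. Qed.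
Lemma unitization_decomp p : p = uin (uvecP p) + ucst (uscal p).
Proof. by apply: unitization_eq => //=; rewrite ?addr0 ?add0r. Qed.

Definition ustar (p : unitization) := Unitization (Vstar (uvecP p)) ((uscal p)^*)%C.

Lemma uvec_ustar p : uvec (ustar p) = star (uvec p). Proof. by []. Qed.
Lemma uscal_ustar p : uscal (ustar p) = ((uscal p)^*)%C. Proof. by []. Qed.
Lemma ustarD p q : ustar (p + q) = ustar p + ustar q.
Proof. by apply: unitization_eq => /=; rewrite ?starD ?rmorphD. Qed.
Lemma ustarN p : ustar (- p) = - ustar p.
Proof. by apply: unitization_eq => /=; rewrite ?starN ?rmorphN. Qed.
Lemma ustarM p q : ustar (p * q) = ustar p * ustar q.
Proof.
apply: unitization_eq => /=; last by rewrite rmorphM mulrC.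
by rewrite !starD !starZ starM (amulC (Vstar (uvecP q)) (Vstar (uvecP p))) addrAC.
Qed.
Lemma ustar1 : ustar 1 = 1.
Proof. by apply: unitization_eq; [exact: star0 | exact: conjc1]. Qed.

Lemma ustar_sub_ucst h (Vh : V h) mu : star h = h ->
  ustar (uin Vh - ucst mu) = uin Vh - ucst (mu^*)%C.
Proof.
move=> sh; rewrite ustarD ustarN; congr (_ - _); apply: unitization_eq => /=.
- exact: sh.
- exact: conjc0.
- exact: star0.
- by [].
Qed.

Definition uinvertible (p : unitization) := exists q, p * q = 1.

Lemma uinvertibleM p q : uinvertible p -> uinvertible q -> uinvertible (p * q).
Proof. by move=> [p' hp] [q' hq]; exists (p' * q'); rewrite mulrACA hp hq mulr1. Qed.
Lemma uinvertible_ucst c : c != 0 -> uinvertible (ucst c).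
Proof. by move=> c0; exists (ucst c^-1); rewrite -ucstM divff // ucst1. Qed.

Lemma uinvertible_1_sub y (Vy : V y) : norm y <= 2^-1 -> uinvertible (1 - uin Vy).
Proof.
move=> ny; have [q Vq e] := quasi_inverse_small Vy ny.
exists (1 + uin Vq).
have e2 : uin Vy * uin Vq = uin Vq - uin Vy by rewrite uinM uinN uinD; apply: uin_eq.
by rewrite mulrBl !mulrDr e2; ring.
Qed.

(** * Spectrum of self-adjoint elements *)

Lemma normc_ge0 (c : R[i]) : 0 <= Normc.normc c.
Proof. by case: c => x y /=; apply: sqrtr_ge0. Qed.
Lemma normc_gt0 (c : R[i]) : c != 0 -> 0 < Normc.normc c.
Proof.
move=> c0; rewrite lt_def normc_ge0 andbT; apply/eqP => /Normc.eq0_normc.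
by apply/eqP.
Qed.
Lemma normc_conj (c : R[i]) : Normc.normc (c^*)%C = Normc.normc c.
Proof. by case: c => x y /=; rewrite sqrrN. Qed.
Lemma normc_Im (s t : R) : `|t| <= Normc.normc (s +i* t)%C.
Proof. by rewrite /= -sqrtr_sqr ler_wsqrtr // lerDr sqr_ge0. Qed.
Lemma normc_iIm (t : R) : Normc.normc (0 +i* t)%C = `|t|.
Proof. by rewrite /= expr0n /= add0r sqrtr_sqr. Qed.

Lemma nonreal_neq0 (s t : R) : t != 0 -> (s +i* t)%C != 0.
Proof. by move=> t0; rewrite eq_complex /= negb_and t0 orbT. Qed.

Lemma normc_Im_le (s t1 t0 : R) : 0 <= t1 -> t1 <= t0 ->
  t1 * Normc.normc (s +i* t0)%C <= t0 * Normc.normc (s +i* t1)%C.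
Proof.
move=> t1p t10; have t0p : 0 <= t0 by apply: le_trans t10.
rewrite /= -{1}(ger0_norm t1p) -{2}(ger0_norm t0p) -!sqrtr_sqr.
rewrite -!sqrtrM ?sqr_ge0 //; apply: ler_wsqrtr.
have : t1 ^+ 2 <= t0 ^+ 2 by rewrite ler_sqr.
move=> h; rewrite !mulrDr; apply: lerD; last by rewrite mulrC.
by apply: ler_wpM2r => //; apply: sqr_ge0.
Qed.

Lemma uinvertible_sub_ucst_large h (Vh : V h) mu : mu != 0 ->
  2 * norm h <= Normc.normc mu -> uinvertible (uin Vh - ucst mu).
Proof.
move=> mu0 hmu; have Vy := VZ mu^-1 Vh.
have -> : uin Vh - ucst mu = ucst (- mu) * (1 - uin Vy).
  rewrite mulrBr mulr1 ucst_mul_uin.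
  have -> : uin (VZ (- mu) Vy) = - uin Vh.
    by rewrite uinN; apply: uin_eq; rewrite scalerA mulNr divff // scaleN1r.
  by rewrite ucstN opprK addrC.
apply: uinvertibleM; first by apply: uinvertible_ucst; rewrite oppr_eq0.
apply: uinvertible_1_sub; rewrite normZ Normc.normcV.
have h2 : norm h <= Normc.normc mu / 2 by rewrite ler_pdivlMr ?ltr0n // mulrC.
apply: (le_trans (ler_wpM2l _ h2)); first by rewrite invr_ge0 normc_ge0.
by rewrite mulrA mulVf ?gt_eqF ?normc_gt0 // mul1r.
Qed.

Lemma uscal_resolvent h (Vh : V h) mu r : mu != 0 ->
  (uin Vh - ucst mu) * r = 1 -> uscal r = - mu^-1.
Proof.
move=> mu0 /(congr1 uscal); rewrite uscalM uscalD uscalN uscal_uin uscal_ucst uscal1 add0r.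
by move/(canRL (mulKf _)) => ->; rewrite ?oppr_eq0 // mulr1 invrN.
Qed.

Lemma unitary_uvec_norm (w : unitization) : ustar w * w = 1 -> norm (uvec w) <= 2.
Proof.
move=> hw; have hs := congr1 uscal hw; have hv := congr1 uvec hw.
rewrite uscalM uscal_ustar uscal1 in hs.
rewrite uvecM uvec_ustar uscal_ustar uvec1 in hv.
set z := uvec w in hv *; set th := uscal w in hs hv.
have nth : Normc.normc th = 1.
  have := congr1 (@Normc.normc R) hs; rewrite Normc.normcM normc_conj Normc.normc1.
  move=> /eqP; rewrite -expr2 sqrf_eq1 => /orP [/eqP //|/eqP e].
  by have := normc_ge0 th; rewrite e ler0N1.
have : norm z ^+ 2 <= 2 * norm z.
  rewrite -norm_cstar.
  have -> : mul (star z) z = - ((th^*)%C *: z + th *: star z).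
    by apply/eqP; rewrite -addr_eq0 addrA hv.
  rewrite normN; apply: (le_trans (normD _ _)); rewrite !normZ normc_conj nth norm_star.
  by rewrite !mul1r mulr2n mulrDl mul1r.
rewrite expr2; have [->|z0] := eqVneq (norm z) 0; first by [].
by rewrite ler_pM2r // lt_def z0 norm_ge0.
Qed.

(* For self-adjoint [h], [w = (h - mu^* ) r] is unitary and [w - 1 = (mu - mu^* ) r],
   which gives the usual bound [|Im mu| |r| <= 1] on the resolvent. *)
Lemma resolvent_norm_le h (Vh : V h) (a b : R) r : star h = h -> b != 0 ->
  (uin Vh - ucst (a +i* b)%C) * r = 1 -> norm (uvec r) * `|b| <= 1.
Proof.
move=> sh b0 hr; set mu := (a +i* b)%C in hr.
have hr' : (uin Vh - ucst (mu^*)%C) * ustar r = 1.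
  by have := congr1 ustar hr; rewrite ustarM ustar_sub_ucst // ustar1.
set w := (uin Vh - ucst (mu^*)%C) * r.
have hw : ustar w * w = 1.
  rewrite /w ustarM ustar_sub_ucst // conjcK.
  have -> : (uin Vh - ucst mu) * ustar r * ((uin Vh - ucst (mu^*)%C) * r) =
      ((uin Vh - ucst mu) * r) * ((uin Vh - ucst (mu^*)%C) * ustar r) by ring.
  by rewrite hr hr' mulr1.
have uvec_w : uvec w = (mu - mu^*)%C *: uvec r.
  have -> : w = 1 + ucst (mu - mu^*)%C * r by rewrite /w ucstB -hr; ring.
  by rewrite uvecD uvec1 add0r uvecM uvec_ucst amul0l uscal_ucst scaler0 add0r addr0.
have dE : (mu - mu^*)%C = (0 +i* (b *+ 2))%C.
  by apply/eqP; rewrite eq_complex /= subrr eqxx /= opprK mulr2n.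
have := unitary_uvec_norm hw; rewrite uvec_w normZ dE normc_iIm normrMn.
by rewrite mulrnAl mulrC; lra.
Qed.

Definition resolvable h (Vh : V h) mu := uinvertible (uin Vh - ucst mu).

(* [h - mu = (h - mu0) (1 - (mu - mu0) r)], and the second factor is a nonzero
   scalar times [1 - y] with [y] small. *)
Lemma resolvable_perturb h (Vh : V h) mu0 mu r K :
  mu0 != 0 -> mu != 0 -> (uin Vh - ucst mu0) * r = 1 -> norm (uvec r) <= K ->
  Normc.normc (mu - mu0) * Normc.normc mu0 * K <= Normc.normc mu / 2 ->
  resolvable Vh mu.
Proof.
move=> mu00 mu_neq0 hr nr hK.
set dl := mu - mu0; set ka := 1 + dl * mu0^-1.
have kaE : ka = mu / mu0 by rewrite /ka /dl; field.
have ka0 : ka != 0 by rewrite kaE mulf_neq0 ?invr_eq0.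
have r_scal := uscal_resolvent mu00 hr.
have e1 : uin Vh - ucst mu = (uin Vh - ucst mu0) * (1 - ucst dl * r).
  have -> : (uin Vh - ucst mu0) * (1 - ucst dl * r) =
      uin Vh - ucst mu0 - ucst dl * ((uin Vh - ucst mu0) * r) by ring.
  by rewrite hr mulr1 /dl ucstB; ring.
have Vy := VZ (dl / ka) (uvecP r).
have e2 : 1 - ucst dl * r = ucst ka * (1 - uin Vy).
  rewrite {1}(unitization_decomp r) r_scal mulrBr mulr1 ucst_mul_uin mulrDr ucst_mul_uin.
  rewrite (uin_eq (VZ ka Vy) (VZ dl (uvecP r))); last by rewrite scalerA mulrC divfK.
  by rewrite /ka [ucst (1 + _)]ucstD ucst1 ucstM ucstN; ring.
rewrite /resolvable e1 e2; apply: uinvertibleM; first by exists r.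
apply: uinvertibleM; first exact: uinvertible_ucst.
apply: uinvertible_1_sub; rewrite normZ.
have -> : dl / ka = dl * mu0 / mu by rewrite kaE invf_div mulrA.
rewrite !Normc.normcM Normc.normcV mulrAC ler_pdivrMr ?normc_gt0 // mulrC.
rewrite [2^-1 * _]mulrC; apply: le_trans hK.
by rewrite [X in X <= _]mulrC ler_wpM2l // mulr_ge0 ?normc_ge0.
Qed.

Section SelfAdjoint.
Variables (h : A) (Vh : V h).
Hypothesis sh : star h = h.

Lemma resolvable_Im_shrink (s t0 t1 : R) : 0 < t0 -> 2 / 3 * t0 <= t1 -> t1 <= t0 ->
  resolvable Vh (s +i* t0)%C -> resolvable Vh (s +i* t1)%C.
Proof.
move=> t0p l1 l2 [r hr].
have t1p : 0 < t1 by apply: lt_le_trans l1; rewrite mulr_gt0 // divr_gt0 ?ltr0n.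
have hB := resolvent_norm_le sh (lt0r_neq0 t0p) hr.
rewrite gtr0_norm // in hB.
apply: (resolvable_perturb (K := t0^-1) (nonreal_neq0 _ (lt0r_neq0 t0p))
  (nonreal_neq0 _ (lt0r_neq0 t1p)) hr).
  by rewrite -(ler_pM2r t0p) mulVf ?lt0r_neq0.
have -> : (s +i* t1)%C - (s +i* t0)%C = (0 +i* (t1 - t0))%C.
  by apply/eqP; rewrite eq_complex /= subrr !eqxx.
have hc := normc_Im_le s (ltW t1p) l2.
rewrite normc_iIm ler0_norm ?subr_le0 // opprB.
set M0 := Normc.normc _ in hc *; set M := Normc.normc (s +i* t1)%C in hc *.
have hd2 : t0 - t1 <= t1 / 2 by lra.
rewrite -mulrA; apply: (le_trans (ler_wpM2r _ hd2)).
  by rewrite mulr_ge0 ?normc_ge0 // invr_ge0 ltW.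
have -> : t1 / 2 * (M0 / t0) = (t1 * M0 / t0) / 2 by field; rewrite lt0r_neq0.
by rewrite ler_pM2r ?invr_gt0 ?ltr0n // ler_pdivrMr // [M * _]mulrC.
Qed.

Lemma resolvable_Im_halve (s t0 t1 : R) : 0 < t0 -> t0 / 2 <= t1 -> t1 <= t0 ->
  resolvable Vh (s +i* t0)%C -> resolvable Vh (s +i* t1)%C.
Proof.
move=> t0p l1 l2 H.
case: (lerP (2 / 3 * t0) t1) => c; first exact: resolvable_Im_shrink H.
have t0p' : 0 < 3 / 4 * t0 by rewrite mulr_gt0 // divr_gt0 ?ltr0n.
apply: (resolvable_Im_shrink t0p'); [lra | lra |].
by apply: (resolvable_Im_shrink t0p); [lra | lra |].
Qed.

(* Descend from the region [Im mu >= 2 |h| + t + 1], where [h - mu] is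
   invertible by the Neumann series, halving [Im mu] at each step. *)
Lemma resolvable_Im_pos (s t : R) : 0 < t -> resolvable Vh (s +i* t)%C.
Proof.
move=> tp; set T := 2 * norm h + t + 1.
have Tp : 0 < T by rewrite /T; have := norm_ge0 h; lra.
suff res_above n t' : T * (2^-1) ^+ n <= t' -> resolvable Vh (s +i* t')%C.
  have [n hn] := half_pow_lt (divr_gt0 tp Tp).
  by apply: (res_above n); rewrite mulrC -ler_pdivlMr //; exact: ltW.
elim: n t' => [|n ih] t'.
  rewrite expr0 mulr1 => hT; have t'p : 0 < t' by apply: lt_le_trans hT.
  apply: uinvertible_sub_ucst_large; first exact: nonreal_neq0 (lt0r_neq0 t'p).
  apply: le_trans (normc_Im s t'); rewrite gtr0_norm //.
  by apply: le_trans hT; rewrite /T; lra.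
move=> hT.
have q0 : 0 < T * (2^-1) ^+ n by rewrite mulr_gt0 // exprn_gt0 // invr_gt0 ltr0n.
case: (lerP (T * (2^-1) ^+ n) t') => c; first exact: ih.
apply: (resolvable_Im_halve q0); [| exact: ltW | exact: ih].
by move: hT; rewrite exprS mulrCA mulrC.
Qed.

Lemma resolvable_nonreal mu : complex.Im mu != 0 -> resolvable Vh mu.
Proof.
case: mu => s t /= t0; case: (ltrP 0 t) => tp; first exact: resolvable_Im_pos.
have tn : 0 < - t by rewrite oppr_gt0 lt_neqAle t0 tp.
have [r hr] := resolvable_Im_pos s tn.
exists (ustar r).
by have := congr1 ustar hr; rewrite ustarM ustar_sub_ucst // ustar1 /= opprK.
Qed.

(* [h^2 - lambda = (h - mu)(h + mu)] with [mu^2 = lambda] nonreal. *)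
Lemma positive_part_sqr : positive_part mul star V (mul h h).
Proof.
have Vhh := VM Vh Vh.
split=> //; split=> [|l hl]; first by rewrite starM sh.
have l0 : l != 0 by apply: contra hl => /eqP ->.
set mu := sqrtc l.
have mu2 : mu ^+ 2 = l by apply: sqr_sqrtc.
have Imu : complex.Im mu != 0.
  apply/eqP => e; apply: (negP hl); rewrite -mu2.
  by move: e; case: (mu) => x y /= ->; rewrite complexr0 -rmorphXn ler0c sqr_ge0.
have Imu' : complex.Im (- mu) != 0 by move: Imu; case: (mu) => x y /=; rewrite oppr_eq0.
have [r1 hr1] := resolvable_nonreal Imu; have [r2 hr2] := resolvable_nonreal Imu'.
have factor : (uin Vh - ucst mu) * (uin Vh - ucst (- mu)) = uin Vhh - ucst l.
  have -> : (uin Vh - ucst mu) * (uin Vh - ucst (- mu)) = uin Vh * uin Vh - ucst mu * ucst mu.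
    by rewrite ucstN; ring.
  by rewrite uinM -ucstM -expr2 mu2 (uin_eq _ Vhh).
have hr : (uin Vhh - ucst l) * (r1 * r2) = 1 by rewrite -factor mulrACA hr1 hr2 mulr1.
have := congr1 uvec hr.
rewrite uvecM uvec1 uvecD uvecN uvec_ucst oppr0 addr0 uscalD uscalN uscal_uin uscal_ucst.
rewrite add0r (uscal_resolvent l0 hr) => hv.
exists (uvec (r1 * r2)); split; first exact: uvecP.
have e1 : mul (mul h h) (uvec (r1 * r2)) - l *: uvec (r1 * r2) - l^-1 *: mul h h = 0.
  by rewrite -hv !scaleNr.
by split=> //; rewrite (amulC (uvecP _) Vhh).
Qed.

End SelfAdjoint.

(** * The lattice of annihilators *)

Local Notation AV := (Ann mul V).
Local Notation P := (positive_part mul star V).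
Local Notation F := (annihilators mul star V).

Definition star_closed (S : set A) := forall x, S x -> S (star x).

Definition star_ideal (J : set A) := [/\ J `<=` V, star_closed J,
  (forall x y, J x -> J y -> J (x + y)), (forall c x, J x -> J (c *: x)) &
  (forall v x, V v -> J x -> J (mul v x))].

Lemma double_eq0 (x : A) : x + x = 0 -> x = 0.
Proof.
move=> h; have : (2 : R[i]) *: x = 0 by rewrite scaler_nat mulr2n.
move=> /(congr1 (fun y => (2 : R[i])^-1 *: y)).
by rewrite scalerA mulVf ?pnatr_eq0 // scale1r scaler0.
Qed.

Lemma anticomm_eq0 a s : V a -> V s -> mul a s + mul s a = 0 <-> mul a s = 0.
Proof.
move=> Va Vs; rewrite (amulC Vs Va); split; first exact: double_eq0.
by move=> ->; rewrite addr0.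
Qed.

(* [z] annihilates [z^*], so [z^* z = 0]. *)
Lemma ann_self_eq0 X z : X `<=` V -> star_closed X -> X z ->
  (forall x, X x -> mul z x + mul x z = 0) -> z = 0.
Proof.
move=> XV Xst Xz h; apply: cstar_eq0; apply: double_eq0.
by have := h _ (Xst _ Xz); rewrite (amulC (XV _ Xz) (Vstar (XV _ Xz))).
Qed.

(* [(a k)^* (a k) = a^* a k^2] by commutativity. *)
Lemma mul_sqr_eq0 a k : V a -> V k -> star k = k -> mul a (mul k k) = 0 -> mul a k = 0.
Proof.
move=> Va Vk sk e0; apply: cstar_eq0; rewrite starM sk.
rewrite (amulC Vk (Vstar Va)) -(amulA (star a) k (mul a k)) (amulA k a k) (amulC Vk Va).
by rewrite -(amulA a k k) e0 amul0r.
Qed.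

Lemma star_ideal_decomp J z : star_ideal J -> J z ->
  exists h1 h2, [/\ J h1, J h2, star h1 = h1, star h2 = h2 & z = h1 + 'i *: h2].
Proof.
case=> _ Jst Jadd Jsc _ Jz.
pose c1 : R[i] := (2^-1 +i* 0)%C; pose c2 : R[i] := (0 +i* - 2^-1)%C.
have conj_c1 : (c1^*)%C = c1 by apply/eqP; rewrite eq_complex /= oppr0 !eqxx.
have conj_c2 : (c2^*)%C = - c2 by apply/eqP; rewrite eq_complex /= oppr0 !eqxx.
have i_c2 : 'i * c2 = c1.
  by apply/eqP; rewrite eq_complex /=; apply/andP; split; apply/eqP; ring.
have c1_c1 : c1 + c1 = 1.
  by apply/eqP; rewrite eq_complex /=; apply/andP; split; apply/eqP; field.
exists (c1 *: (z + star z)), (c2 *: (z - star z)); split.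
- by apply: (Jsc); apply: (Jadd) => //; apply: (Jst).
- by apply: (Jsc); apply: (Jadd) => //; rewrite -scaleN1r; apply: (Jsc); apply: (Jst).
- by rewrite starZ conj_c1 starD starK addrC.
- by rewrite starZ conj_c2 starD starN starK scaleNr -scalerN opprD opprK addrC.
- rewrite scalerA i_c2 -scalerDr addrACA subrr addr0.
  by rewrite scalerDr -scalerDl c1_c1 scale1r.
Qed.

Lemma Ann_sub S : AV S `<=` V. Proof. by move=> a []. Qed.

Lemma Ann_anti S T : S `<=` T -> AV T `<=` AV S.
Proof. by move=> ST a [Va h]; split=> // s /ST; apply: h. Qed.

Lemma sub_Ann2 S : S `<=` V -> S `<=` AV (AV S).
Proof. by move=> SV s Ss; split=> [|a [_ h]]; [exact: SV | rewrite addrC; apply: h]. Qed.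

Lemma Ann2S S T : S `<=` T -> AV (AV S) `<=` AV (AV T).
Proof. by move=> ST; apply/Ann_anti/Ann_anti. Qed.

Lemma Ann3 S : S `<=` V -> AV (AV (AV S)) = AV S.
Proof.
by move=> SV; rewrite eqEsubset; split; [apply/Ann_anti/sub_Ann2 | apply/sub_Ann2/Ann_sub].
Qed.

Lemma Ann0 S : AV S 0.
Proof. by split=> [|s _]; [exact: V0 | rewrite amul0l amul0r addr0]. Qed.

Lemma AnnU S T : AV (S `|` T) = AV S `&` AV T.
Proof.
rewrite eqEsubset; split=> [a h|a [[Va h1] [_ h2]]].
  by split; apply: (Ann_anti _ h) => z hz; [left | right].
by split=> // z [] ?; [apply: h1 | apply: h2].
Qed.

Lemma Ann_star_ideal S : S `<=` V -> star_closed S -> star_ideal (AV S).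
Proof.
move=> SV Sst; split.
- exact: Ann_sub.
- move=> a [Va h]; split=> [|s Ss]; first exact: Vstar.
  have := h _ (Sst _ Ss); move/(congr1 star).
  by rewrite starD !starM starK star0 addrC.
- move=> a b [Va ha] [Vb hb]; split=> [|s Ss]; first exact: VD.
  by rewrite amulDl amulDr addrACA ha // hb // addr0.
- move=> c a [Va ha]; split=> [|s Ss]; first exact: VZ.
  by rewrite amulZl amulZr -scalerDr ha // scaler0.
- move=> v a Vv [Va h]; split=> [|s Ss]; first exact: VM.
  rewrite -(amulA v a s) (amulA s v a) (amulC (SV _ Ss) Vv) -(amulA v s a) -amulDr h //.
  exact: amul0r.
Qed.

(* Write [z] in [J] as [h1 + i h2] with [h1], [h2] self-adjoint in [J]; then
   [h^2] is positive and [a h^2 = 0] forces [a h = 0]. *)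
Lemma Ann_positive_ideal J : star_ideal J -> AV (P `&` J) = AV J.
Proof.
move=> gJ; rewrite eqEsubset; split; last by apply: Ann_anti => z [].
have [JV _ _ _ Jid] := gJ.
have ann_sa k a : V a -> AV (P `&` J) a -> J k -> star k = k -> mul a k = 0.
  move=> Va [_ hP] Jk sk; have Vk := JV _ Jk.
  apply: mul_sqr_eq0 => //; apply/(anticomm_eq0 Va (VM Vk Vk)).
  by apply: hP; split; [apply: positive_part_sqr | apply: Jid].
move=> a ha; have Va := Ann_sub ha; split=> // z Jz.
apply/(anticomm_eq0 Va (JV _ Jz)).
have [h1 [h2 [Jh1 Jh2 s1 s2 ->]]] := star_ideal_decomp gJ Jz.
by rewrite amulDr amulZr !(ann_sa _ a) // scaler0 addr0.
Qed.

Lemma annihilatorsP X : F X <-> exists S, [/\ S `<=` V, star_closed S & X = AV S].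
Proof.
split=> [[S0 [S0P ->]]|[S [SV Sst ->]]].
  have S0V : S0 `<=` V by move=> z /S0P [].
  have S0st : star_closed S0 by move=> z Sz; have [_ [-> _]] := S0P z Sz.
  exists (AV S0); split=> //; first exact: Ann_sub.
  by case: (Ann_star_ideal S0V S0st).
exists (P `&` AV S); split; first by move=> z [].
by rewrite Ann_positive_ideal ?Ann3 //; apply: Ann_star_ideal.
Qed.

Lemma annihilators_star_ideal X : F X -> star_ideal X.
Proof. by move=> /annihilatorsP [S [SV Sst ->]]; apply: Ann_star_ideal. Qed.

Lemma annihilators_Ann2 X : F X -> AV (AV X) = X.
Proof. by move=> /annihilatorsP [S [SV _ ->]]; apply: Ann3. Qed.

Lemma annihilators0 X : F X -> X 0.
Proof. by move=> /annihilatorsP [S [_ _ ->]]; apply: Ann0. Qed.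

Lemma annihilators_Ann X : F X -> F (AV X).
Proof.
move=> FX; have [XV Xst _ _ _] := annihilators_star_ideal FX.
by apply/annihilatorsP; exists X.
Qed.

Lemma annihilatorsI X Y : F X -> F Y -> F (X `&` Y).
Proof.
move=> /annihilatorsP [S [SV Sst ->]] /annihilatorsP [T [TV Tst ->]].
apply/annihilatorsP; exists (S `|` T); split; last by rewrite AnnU.
- by move=> z [] ?; [apply: SV | apply: TV].
- by move=> z [] ?; [left; apply: Sst | right; apply: Tst].
Qed.

Lemma annihilators_join X Y : F X -> F Y -> F (AV (AV (X `|` Y))).
Proof. by move=> FX FY; rewrite AnnU; apply/annihilators_Ann/annihilatorsI; apply: annihilators_Ann. Qed.

Lemma is_meet_annihilators X Y : F X -> F Y -> is_meet F X Y (X `&` Y).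
Proof.
move=> FX FY; split; first exact: annihilatorsI.
by split; [|split]; [move=> z [] | move=> z [] | move=> K _ KX KY z Kz; split; [apply: KX | apply: KY]].
Qed.

Lemma is_join_annihilators X Y : F X -> F Y -> is_join F X Y (AV (AV (X `|` Y))).
Proof.
move=> FX FY; have [XV _ _ _ _] := annihilators_star_ideal FX.
have [YV _ _ _ _] := annihilators_star_ideal FY.
have XYV : X `|` Y `<=` V by move=> z [] ?; [apply: XV | apply: YV].
split; first exact: annihilators_join.
split; [|split]; [move=> z Xz | move=> z Yz | move=> K FK XK YK].
- by apply: sub_Ann2 => //; left.
- by apply: sub_Ann2 => //; right.
- by rewrite -(annihilators_Ann2 FK); apply: Ann2S => z [] ?; [apply: XK | apply: YK].
Qed.

(* For [a] in [X] and [J = Y \/ Z], any [b] annihilating [(X /\ Y) \/ (X /\ Z)] makes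
   [b a] an element of [J] that annihilates [Y \/ Z], hence [J], hence itself. *)
Lemma annihilators_distr X Y Z : F X -> F Y -> F Z ->
  X `&` AV (AV (Y `|` Z)) = AV (AV ((X `&` Y) `|` (X `&` Z))).
Proof.
move=> FX FY FZ; have FJ := annihilators_join FY FZ.
have [XV _ _ _ Xid] := annihilators_star_ideal FX.
have [YV _ _ _ Yid] := annihilators_star_ideal FY.
have [ZV _ _ _ Zid] := annihilators_star_ideal FZ.
have [JV Jst _ _ Jid] := annihilators_star_ideal FJ.
have YZV : Y `|` Z `<=` V by move=> z [] ?; [apply: YV | apply: ZV].
rewrite eqEsubset; split; last first.
  rewrite -[X in _ `<=` X](annihilators_Ann2 (annihilatorsI FX FJ)); apply: Ann2S.
  by move=> z [] [Xz hz]; split=> //; apply: sub_Ann2 => //; [left | right].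
move=> a [Xa Ja]; have Va := XV _ Xa; split=> // b [Vb hb].
apply/(anticomm_eq0 Va Vb); rewrite (amulC Va Vb).
have ba_ann : AV (Y `|` Z) (mul b a).
  split=> [|y YZy]; first exact: VM.
  have Vy := YZV _ YZy.
  apply/(anticomm_eq0 (VM Vb Va) Vy); rewrite -amulA; apply/(anticomm_eq0 Vb (VM Va Vy)).
  apply: hb; case: YZy => [Yy|Zy]; [left | right]; split; rewrite ?(amulC Va Vy) //.
  - exact: Xid.
  - by rewrite (amulC Vy Va); apply: Yid.
  - exact: Xid.
  - by rewrite (amulC Vy Va); apply: Zid.
rewrite -(Ann3 YZV) in ba_ann; have [_ ba_annJ] := ba_ann.
exact: (ann_self_eq0 JV Jst (Jid _ _ Vb Ja)).
Qed.

Lemma annihilators_distributive : distributive_lattice F.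
Proof.
split=> [X Y FX FY|X Y Z FX FY FZ j m a b d hj hm ha hb hd].
  by split; [exists (AV (AV (X `|` Y))); apply: is_join_annihilators
            | exists (X `&` Y); apply: is_meet_annihilators].
have FJ := annihilators_join FY FZ.
rewrite (is_join_uniq hj (is_join_annihilators FY FZ)) in hm.
rewrite (is_meet_uniq hm (is_meet_annihilators FX FJ)).
rewrite (is_meet_uniq ha (is_meet_annihilators FX FY)) in hd.
rewrite (is_meet_uniq hb (is_meet_annihilators FX FZ)) in hd.
rewrite (is_join_uniq hd (is_join_annihilators (annihilatorsI FX FY) (annihilatorsI FX FZ))).
exact: annihilators_distr.
Qed.

Lemma star_ideal_V : star_ideal V.
Proof. by split=> //; [exact: Vstar | exact: VD | exact: VZ | exact: VM]. Qed.

Lemma Ann_set0 : AV set0 = V.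
Proof. by rewrite eqEsubset; split; [exact: Ann_sub | move=> x Vx; split]. Qed.

Lemma Ann_set1_0 : AV [set 0] = V.
Proof.
rewrite eqEsubset; split=> [|x Vx]; first exact: Ann_sub.
by split=> // _ ->; rewrite amul0l amul0r addr0.
Qed.

Lemma Ann_self X : F X -> X `&` AV X = [set 0].
Proof.
move=> FX; have [XV Xst _ _ _] := annihilators_star_ideal FX.
rewrite eqEsubset; split=> [z [Xz [_ hz]]|_ ->]; last by split; [apply: annihilators0 | apply: Ann0].
exact: (ann_self_eq0 XV Xst Xz).
Qed.

Lemma Ann_V : AV V = [set 0].
Proof.
rewrite eqEsubset; split=> [z [Vz hz]|_ ->]; last exact: Ann0.
exact: (ann_self_eq0 (@subset_refl _ V) (@Vstar) Vz).
Qed.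

Lemma Ann_positive : AV P = [set 0].
Proof.
rewrite -Ann_V -(Ann_positive_ideal star_ideal_V); congr AV.
by rewrite eqEsubset; split=> [x Px|x []]; first by split; case: Px.
Qed.

Lemma annihilators_boolean : boolean_algebra F.
Proof.
split; first exact: annihilators_distributive.
exists (AV (AV set0)), (AV (AV P)).
have bot : AV (AV set0) = [set 0] by rewrite Ann_set0 Ann_V.
have top : AV (AV P) = V by rewrite Ann_positive Ann_set1_0.
split; first by exists set0; split; first exact: sub0set.
split; first by exists P; split.
split=> [X FX|X FX].
  rewrite bot top; have [XV _ _ _ _] := annihilators_star_ideal FX.
  by split=> // _ ->; apply: annihilators0.
exists (AV X); split; first exact: annihilators_Ann.
split; first by rewrite bot -(Ann_self FX); apply: is_meet_annihilators (annihilators_Ann FX).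
have -> : AV (AV P) = AV (AV (X `|` AV X)).
  by rewrite Ann_positive AnnU (annihilators_Ann2 FX) setIC Ann_self.
exact: is_join_annihilators (annihilators_Ann FX).
Qed.

End AbelianSubalgebra.
End CStarAlgebra.

Theorem lemma14 (R : realType) (A : lmodType R[i])
  (mul : A -> A -> A) (star : A -> A) (norm : A -> R)
  (hA : cstar_axioms mul star norm)
  (V : set A)
  (hVann : annihilators mul star setT V)
  (hVab : abelian mul star norm V) :
  boolean_algebra (annihilators mul star V) /\
  (forall W : set A, annihilators mul star setT W -> abelian mul star norm W ->
     modular_lattice (annihilators mul star W)).
Proof.
split; first exact: (annihilators_boolean hA hVab).
move=> W _ hW; apply: distributive_modular.
exact: (annihilators_boolean hA hW).1.
Qed.
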